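(* Let $T[n]$ be a standard Young tableau with exactly two rows, and let $T$ denote its second row, with entries $t_1<t_2<\dots<t_m$. Then during one promotion step applied to $T[n]$, the $k$-th entry $t_k$ of $T$ slides from the second row into the top row if and only if $t_k=2k$ and there is no $i<k$ with $t_i=2i$.
   Context: For a tableau $T$ with distinct positive entries, $T[n]$ is obtained by placing above $T$ a top row consisting of all elements of $\{1,\dots,n\}$ not in $T$, in increasing order. Promotion of a tableau with distinct entries $i_1<\dots<i_m$: (1) remove the top-left entry, leaving an empty box; (2) while the empty box has a box to its right or below, slide into it the smaller of the entries of those boxes (jeu-de-taquin slides); (3) then replace each remaining entry $i_k$ by $i_{k-1}$; (4) place $i_m$ in the empty box. ''Slides into the top row'' refers to a slide in step (2) moving an entry from the second row up into the first row. *)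

From mathcomp Require Import all_boot.
Set Implicit Arguments. Unset Strict Implicit. Unset Printing Implicit Defensive.

(* A tableau is a list of rows (row 0 = top row), each a list of entries
   read left to right. *)
Definition tableau := seq (seq nat).

Definition entry (t : tableau) (r c : nat) : option nat :=
  let row := nth [::] t r in
  if c < size row then Some (nth 0 row c) else None.

Definition is_SYT (t : tableau) : Prop :=
  [/\ all (fun row => 0 < size row) t,
      sorted geq (map size t),
      all (sorted ltn) t,
      (forall r c, c < size (nth [::] t r.+1) ->
         nth 0 (nth [::] t r) c < nth 0 (nth [::] t r.+1) c)
    & perm_eq (flatten t) (iota 1 (size (flatten t)))].

(* T[n]: place above T (a single row here) the row of all elements of
   {1..n} not in T, in increasing order. *)
Definition Tn (n : nat) (T : seq nat) : tableau :=
  [:: [seq i <- iota 1 n | i \notin T]; T].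

(* Step (2) of promotion: jeu-de-taquin slides of the empty box, starting
   at position (r, c).  The result is the list of slides performed, each
   recorded as (entry moved, row it comes from, row it moves into).  Boxes ahead of the empty box (to its
   right / below) have not been touched by earlier slides, so reading them
   from the original tableau is correct.  [fuel] bounds the number of
   slides (the number of boxes suffices). *)
Fixpoint slides (fuel : nat) (t : tableau) (r c : nat)
  : seq (nat * nat * nat) :=
  match fuel with
  | 0 => [::]
  | fuel'.+1 =>
    match entry t r c.+1, entry t r.+1 c with
    | None, None => [::]
    | Some x, None => (x, r, r) :: slides fuel' t r c.+1
    | None, Some y => (y, r.+1, r) :: slides fuel' t r.+1 c
    | Some x, Some y =>
        if x < y then (x, r, r) :: slides fuel' t r c.+1
        else (y, r.+1, r) :: slides fuel' t r.+1 c
    end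
  end.

(* The slides performed during one promotion step of T[n]: the top-left
   entry is removed (step (1)), leaving the empty box at (0,0). *)
Definition promotion_slides (n : nat) (T : seq nat) : seq (nat * nat * nat) :=
  slides (size (flatten (Tn n T))) (Tn n T) 0 0.

Definition slides_into_top_row (n : nat) (T : seq nat) (x : nat) : Prop :=
  (x, 1, 0) \in promotion_slides n T.

From mathcomp Require Import all_boot.
From mathcomp Require Import zify.
Set Implicit Arguments. Unset Strict Implicit. Unset Printing Implicit Defensive.

(* Let A be the top row of T[n].  After the top-left entry is removed, the
   empty box travels along the top row while the entry to its right is
   smaller than the entry below it, and drops into the second row at the
   first column where this fails; the entry of T below it at that moment is
   the only one that enters the top row.  Consider the empty box at column c
   (0-based) and v := t_(c+1).  Since A and T together hold exactly 1..N,
   the values below v are the c entries of T left of v and the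
   a := #{x in A | x < v} >= c+1 entries of A, so v = a + c + 1.  Hence the
   box moves right iff a >= c+2, i.e. iff v <> 2(c+1): it drops at the first
   column c with t_(c+1) = 2(c+1). *)

Lemma sorted_ltn_nth_lt_count (s : seq nat) v : sorted ltn s ->
  forall i, i < size s -> (nth 0 s i < v) = (i < count (fun x => x < v) s).
Proof.
elim: s => [//|x s IH] /= sorted_xs.
have sorted_s := path_sorted sorted_xs.
have x_lt_s : all (fun y => x < y) s.
  by move: sorted_xs; rewrite (path_sortedE ltn_trans) => /andP[].
have count0 : v <= x -> count (fun y => y < v) s = 0.
  move=> le_vx; apply/eqP; rewrite -leqn0 leqNgt -has_count; apply/hasPn => y ys /=.
  by rewrite -leqNgt; apply: leq_trans le_vx (ltnW (allP x_lt_s y ys)).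
case=> [_|i] /=; first by case: ltnP => // le_vx; rewrite count0.
move=> lt_i_s; case: (ltnP x v) => [lt_xv|le_vx]; first by rewrite add1n ltnS IH.
rewrite count0 // add0n /=; apply/negbTE; rewrite -leqNgt.
exact: leq_trans le_vx (ltnW (allP x_lt_s _ (mem_nth 0 lt_i_s))).
Qed.

Lemma count_lt_sorted_nth (s : seq nat) c : sorted ltn s -> c < size s ->
  count (fun x => x < nth 0 s c) s = c.
Proof.
move=> sorted_s lt_c_s; apply/eqP; rewrite eqn_leq.
rewrite leqNgt -(sorted_ltn_nth_lt_count _ sorted_s) // ltnn /=.
case: c lt_c_s => // c lt_c_s.
rewrite -(sorted_ltn_nth_lt_count _ sorted_s) ?(ltnW lt_c_s) //.
by apply: (sorted_ltn_nth ltn_trans 0 sorted_s); rewrite ?inE ?(ltnW lt_c_s).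
Qed.

Lemma count_lt_iota v m N : count (fun x => x < v) (iota m N) = minn N (v - m).
Proof.
elim: N m => [|N IH] m /=; first by rewrite min0n.
by rewrite IH; case: ltnP => /= ?; lia.
Qed.

Lemma count_lt_perm_iota (s : seq nat) v : perm_eq s (iota 1 (size s)) ->
  v \in s -> count (fun x => x < v) s = v.-1.
Proof.
move=> perm_s v_s; have := v_s; rewrite (perm_mem perm_s) mem_iota => v_range.
by rewrite (permP perm_s) count_lt_iota; lia.
Qed.

Definition moves_right (A T : seq nat) c :=
  (c.+1 < size A) && (nth 0 A c.+1 < nth 0 T c).

Lemma moves_rightE (A T : seq nat) c : sorted ltn A -> sorted ltn T ->
  perm_eq (A ++ T) (iota 1 (size (A ++ T))) -> c < size T -> c < size A ->
  nth 0 A c < nth 0 T c -> moves_right A T c = (nth 0 T c != 2 * c.+1).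
Proof.
move=> sorted_A sorted_T perm_AT lt_c_T lt_c_A column_c.
set v := nth 0 T c; set a := count (fun x => x < v) A.
have below_v : a + c = v.-1.
  rewrite -(count_lt_sorted_nth sorted_T lt_c_T) -count_cat.
  by apply: count_lt_perm_iota; rewrite // mem_cat mem_nth ?orbT.
have lt_c_a : c < a by rewrite -(sorted_ltn_nth_lt_count _ sorted_A).
have -> : moves_right A T c = (c.+1 < a).
  rewrite /moves_right; case: ltnP => [lt_c1_A|le_A_c1] /=.
    exact: sorted_ltn_nth_lt_count.
  by apply/esym/negbTE; rewrite -leqNgt; apply: leq_trans (count_size _ _) le_A_c1.
by apply/idP/idP => [|/eqP]; lia.
Qed.

Lemma slides_row1 fuel (A T : seq nat) c x :
  (x, 1, 0) \notin slides fuel [:: A; T] 1 c.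
Proof.
elim: fuel c => [//|fuel IH] c /=; rewrite /entry /=.
by case: ifP => _ //; rewrite in_cons (negbTE (IH _)) orbF !xpair_eqE andbF.
Qed.

Lemma slides_row0_past_T fuel (A T : seq nat) c x : size T <= c ->
  (x, 1, 0) \notin slides fuel [:: A; T] 0 c.
Proof.
elim: fuel c => [//|fuel IH] c le_T_c /=; rewrite /entry /=.
have -> : (c < size T) = false by rewrite ltnNge le_T_c.
case: ifP => _ //.
by rewrite in_cons (negbTE (IH _ (leqW le_T_c))) orbF !xpair_eqE andbF.
Qed.

Lemma slides_row0_step fuel (A T : seq nat) c : c < size T ->
  slides fuel.+1 [:: A; T] 0 c =
  if moves_right A T c then (nth 0 A c.+1, 0, 0) :: slides fuel [:: A; T] 0 c.+1
  else (nth 0 T c, 1, 0) :: slides fuel [:: A; T] 1 c.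
Proof.
by move=> lt_c_T; rewrite /= /entry /= lt_c_T /moves_right; case: ltnP.
Qed.

Lemma slides_into_row0 fuel (A T : seq nat) c x : size T <= c + fuel ->
  (x, 1, 0) \in slides fuel [:: A; T] 0 c <->
  exists2 d, c <= d < size T &
    [/\ forall i, c <= i < d -> moves_right A T i, ~~ moves_right A T d
      & x = nth 0 T d].
Proof.
elim: fuel c => [|fuel IH] c enough_fuel.
  by split=> // -[d /andP[? ?] _]; lia.
case: (ltnP c (size T)) => [lt_c_T|le_T_c]; last first.
  by rewrite (negbTE (slides_row0_past_T _ _ _ le_T_c)); split=> // -[d /andP[? ?] _]; lia.
rewrite slides_row0_step //; case right_c: (moves_right A T c).
  rewrite in_cons !xpair_eqE andbF /=.
  rewrite IH ?addSnnS //; split=> -[d /andP[le_cd lt_d_T] [right_before stop_d ->]].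
    exists d; first by rewrite ltnW.
    split=> // i /andP[le_ci lt_id].
    by case: (ltnP c i) => [lt_ci|le_ic]; [apply: right_before; rewrite lt_ci | have -> : i = c by lia].
  have lt_cd : c < d by rewrite ltn_neqAle le_cd andbT; apply: contraNneq stop_d => <-.
  exists d; first by rewrite lt_cd.
  by split=> // i /andP[lt_ci lt_id]; apply: right_before; rewrite lt_id ltnW.
rewrite in_cons (negbTE (slides_row1 _ _ _ _ _)) orbF !xpair_eqE /= !andbT.
split=> [/eqP ->|[d /andP[le_cd _] [right_before stop_d ->]]].
  by exists c; rewrite ?leqnn ?lt_c_T ?right_c //; split=> // i; lia.
suff -> : d = c by [].
apply/eqP; rewrite eqn_leq le_cd andbT leqNgt; apply/negP => lt_cd.
by move: right_c; rewrite right_before ?leqnn.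
Qed.

Theorem lemma4p3 (n : nat) (T : seq nat) :
  is_SYT (Tn n T) ->
  forall k, 1 <= k <= size T ->
    (slides_into_top_row n T (nth 0 T k.-1) <->
     (nth 0 T k.-1 = 2 * k /\
      ~ (exists i, 1 <= i < k /\ nth 0 T i.-1 = 2 * i))).
Proof.
rewrite /is_SYT /slides_into_top_row /promotion_slides /Tn.
set A := [seq i <- iota 1 n | i \notin T].
case=> _ /= /andP[le_T_A _] /and3P[sorted_A sorted_T _] columns perm_AT.
rewrite cats0 in perm_AT.
have right_iff d : d < size T -> moves_right A T d = (nth 0 T d != 2 * d.+1).
  move=> lt_d_T; apply: moves_rightE => //; first exact: leq_trans lt_d_T le_T_A.
  exact: (columns 0).
have uniq_T : uniq T := sorted_uniq ltn_trans ltnn sorted_T.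
case=> [//|c] /= lt_c_T.
rewrite slides_into_row0 /= ?cats0 ?size_cat ?leq_addl //.
split=> [[d lt_d_T [right_before stop_d]]|[T_c no_earlier]].
  move/eqP; rewrite nth_uniq // => /eqP eq_cd; subst d.
  move: stop_d; rewrite right_iff // negbK => /eqP T_c; split=> // -[i [range_i T_i]].
  have lt_i_c : i.-1 < c by lia.
  have := right_before _ lt_i_c; rewrite right_iff; last by lia.
  by rewrite prednK ?T_i ?eqxx //; lia.
exists c => //; split=> //; last by rewrite right_iff // T_c eqxx.
move=> i range_i; rewrite right_iff; last by lia.
by apply/eqP => T_i; apply: no_earlier; exists i.+1; split; [lia|].
Qed.
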